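(* Let f1 and f2 be two point agents in the plane, each moving with a constant nonzero velocity, such that their straight-line trajectories are not parallel and hence intersect in a single point $P$. Let $t_1$ and $t_2$ be the times at which f1 and f2 respectively pass through $P$, and suppose $t_1>t_2$ (f1 reaches the intersection after f2). Then f1 perceives generalized regressive motion (GRM) from f2 at all times $t<t_2$.
   Context: Each agent is a point (center of projection) with a heading equal to the direction of its velocity. For observer f1 and observed f2, let $\phi_{21}(t)\in[-\pi,\pi)$ be the azimuthal position of f2 as seen from f1, measured relative to f1's heading: $\phi=0$ is straight ahead, positive angles are to the observer's left (counterclockwise) and negative to its right; $\dot\phi_{21}$ is its time derivative. Fix the Contralateral Visual Angle $\mathrm{CVA}\in[0,\pi]$ (the angular distance of the nasal boundary of each eye's visual field from the straight-ahead direction). f1 perceives GRM from f2 at time $t$ if and only if either $\dot\phi_{21}(t)>0$ and $\phi_{21}(t)\in[-\pi,\mathrm{CVA}]$, or $\dot\phi_{21}(t)<0$ and $\phi_{21}(t)\in[-\mathrm{CVA},\pi]$. *)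

From Stdlib Require Import Reals Lra.
Open Scope R_scope.

Definition pt := (R * R)%type.

Definition padd (p q : pt) : pt := (fst p + fst q, snd p + snd q).
Definition psub (p q : pt) : pt := (fst p - fst q, snd p - snd q).
Definition pscale (k : R) (p : pt) : pt := (k * fst p, k * snd p).
Definition dot (p q : pt) : R := fst p * fst q + snd p * snd q.
(* cross u w > 0  iff  w points to the left (counterclockwise) of u *)
Definition cross (p q : pt) : R := fst p * snd q - snd p * fst q.

Definition traj (a v : pt) (t : R) : pt := padd a (pscale t v).

(* Polar angle in [-PI, PI) of the planar vector (x, y) (x-axis = 0,
   counterclockwise positive).  Off the closed negative x-axis it is
   2 atan (y / (|(x,y)| + x)); on the open negative x-axis it is -PI
   (the [-PI,PI) convention); for the zero vector it is (arbitrarily) 0. *)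
Definition angle (x y : R) : R :=
  if Req_EM_T y 0 then
    (if Rlt_dec x 0 then - PI else 0)
  else 2 * atan (y / (sqrt (x * x + y * y) + x)).

(* Azimuth phi_21 of the point q (observed) as seen from an observer at p
   with heading vector h (nonzero): angle of q - p measured from h,
   positive to the observer's left (counterclockwise). *)
Definition azimuth (p h q : pt) : R :=
  let r := psub q p in angle (dot h r) (cross h r).

Definition phi21 (a1 v1 a2 v2 : pt) (t : R) : R :=
  azimuth (traj a1 v1 t) v1 (traj a2 v2 t).

Definition perceives_GRM (CVA : R) (phi : R -> R) (t : R) : Prop :=
  exists dphi : R, derivable_pt_lim phi t dphi /\
    ((dphi > 0 /\ - PI <= phi t <= CVA) \/
     (dphi < 0 /\ - CVA <= phi t <= PI)).

(* Relative to f1's heading, f2 sits at (X, Y) = (dot v1 r, cross v1 r) with r = q2 - q1, and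
   phi = angle X Y has derivative cross(r, v2 - v1) / |r|^2.  Writing each agent through
   the intersection point, r(t) = (t - t2) v2 - (t - t1) v1, hence Y = (t - t2) cross(v1, v2)
   while cross(r, v2 - v1) = (t1 - t2) cross(v1, v2).  For t < t2 < t1 these two have opposite
   signs, and since phi has the sign of Y, phi and its derivative have opposite signs: f2 drifts
   back towards f1's straight-ahead direction, which is GRM for every CVA >= 0. *)
From Stdlib Require Import Reals Lra.
From Coquelicot Require Import Coquelicot.
Open Scope R_scope.

Lemma sqrt_norm_add_gt0 (x y : R) : y <> 0 -> 0 < sqrt (x * x + y * y) + x.
Proof.
  intros Hy.
  assert (Hyy : 0 < y * y) by (apply Rsqr_pos_lt; exact Hy).
  assert (Hs := sqrt_sqrt (x * x + y * y) ltac:(nra)).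
  assert (H0 := sqrt_pos (x * x + y * y)).
  nra.
Qed.

Lemma angle_atan (x y : R) :
  y <> 0 -> angle x y = 2 * atan (y / (sqrt (x * x + y * y) + x)).
Proof. intros Hy; unfold angle; destruct (Req_EM_T y 0); [contradiction | reflexivity]. Qed.

Lemma angle_bound (x y : R) : - PI <= angle x y <= PI.
Proof.
  pose proof PI_RGT_0.
  destruct (Req_dec y 0) as [Hy | Hy].
  - unfold angle; destruct (Req_EM_T y 0); [|contradiction].
    destruct (Rlt_dec x 0); lra.
  - rewrite angle_atan by exact Hy.
    pose proof (atan_bound (y / (sqrt (x * x + y * y) + x))); lra.
Qed.

Lemma angle_mul_gt0 (x y : R) : y <> 0 -> 0 < y * angle x y.
Proof.
  intros Hy; rewrite angle_atan by exact Hy.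
  assert (Hd := sqrt_norm_add_gt0 x y Hy).
  set (d := sqrt (x * x + y * y) + x) in *.
  destruct (Rlt_or_le 0 y) as [Hpos | Hneg].
  - assert (atan 0 < atan (y / d)) by (apply atan_increasing, Rdiv_lt_0_compat; lra).
    rewrite atan_0 in *; nra.
  - assert (Hyd : y / d < 0)
      by (unfold Rdiv; apply Rmult_neg_pos; [lra | apply Rinv_0_lt_compat; lra]).
    assert (atan (y / d) < atan 0) by (apply atan_increasing; exact Hyd).
    rewrite atan_0 in *; nra.
Qed.

Lemma is_derive_angle (f g : R -> R) (t df dg : R) :
  is_derive f t df -> is_derive g t dg -> g t <> 0 ->
  is_derive (fun u => angle (f u) (g u)) t
    ((f t * dg - g t * df) / (f t * f t + g t * g t)).
Proof.
  intros Hf Hg Hgt.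
  apply is_derive_ext_loc with
    (f := fun u => 2 * atan (g u / (sqrt (f u * f u + g u * g u) + f u))).
  - assert (Hc : filterlim g (locally t) (locally (g t)))
      by (apply (ex_derive_continuous (K := R_AbsRing) (V := R_NormedModule));
          exists dg; exact Hg).
    apply filterlim_locally with (eps := mkposreal _ (Rabs_pos_lt _ Hgt)) in Hc.
    revert Hc; apply filter_imp; intros u Hu; simpl in Hu.
    symmetry; apply angle_atan; intros E.
    rewrite E in Hu; unfold ball in Hu; simpl in Hu.
    unfold AbsRing_ball, abs, minus, plus, opp in Hu; simpl in Hu.
    rewrite Rplus_0_l, Rabs_Ropp in Hu; lra.
  - assert (Hpos := sqrt_norm_add_gt0 (f t) (g t) Hgt).
    assert (Hyy : 0 < g t * g t) by (apply Rsqr_pos_lt; exact Hgt).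
    evar (l : R).
    assert (Hd : is_derive (fun u => 2 * atan (g u / (sqrt (f u * f u + g u * g u) + f u))) t l).
    { auto_derive.
      - repeat split; try (exists df; exact Hf); try (exists dg; exact Hg); nra.
      - subst l; reflexivity. }
    replace ((f t * dg - g t * df) / (f t * f t + g t * g t)) with l; [exact Hd|]; subst l.
    replace (Derive (fun u => f u) t) with df by (symmetry; exact (is_derive_unique _ _ _ Hf)).
    replace (Derive (fun u => g u) t) with dg by (symmetry; exact (is_derive_unique _ _ _ Hg)).
    set (s := sqrt (f t * f t + g t * g t)) in *.
    assert (Hss : s * s = f t * f t + g t * g t) by (apply sqrt_sqrt; nra).
    assert (0 < s) by (unfold s; apply sqrt_lt_R0; nra).
    rewrite <- Hss; field_simplify_eq; [|repeat split; try lra; nra].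
    replace (g t ^ 3) with (g t * g t ^ 2) by ring.
    replace (g t ^ 2) with (s ^ 2 - f t ^ 2) by nra; ring.
Qed.

Definition rel (a1 v1 a2 v2 : pt) (t : R) : pt := psub (traj a2 v2 t) (traj a1 v1 t).

Lemma dot_self_gt0 (v : pt) : v <> (0, 0) -> 0 < dot v v.
Proof.
  destruct v as [x y]; unfold dot; simpl; intros Hv.
  destruct (Req_dec x 0) as [-> | Hx]; [destruct (Req_dec y 0) as [-> | Hy] |].
  - contradiction.
  - assert (0 < y * y) by (apply Rsqr_pos_lt; exact Hy); lra.
  - assert (0 < x * x) by (apply Rsqr_pos_lt; exact Hx); nra.
Qed.

Lemma dot_cross_wronskian (v r w : pt) :
  dot v r * cross v w - cross v r * dot v w = dot v v * cross r w.
Proof. destruct v, r, w; unfold dot, cross; simpl; ring. Qed.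

Lemma phi21_derivative (a1 v1 a2 v2 : pt) (t : R) :
  let r := rel a1 v1 a2 v2 t in
  cross v1 r <> 0 ->
  derivable_pt_lim (phi21 a1 v1 a2 v2) t
    (dot v1 v1 * cross r (psub v2 v1) / (dot v1 r * dot v1 r + cross v1 r * cross v1 r)).
Proof.
  intros r Hr.
  apply is_derive_Reals.
  rewrite <- dot_cross_wronskian.
  apply (is_derive_angle (fun u => dot v1 (rel a1 v1 a2 v2 u))
                         (fun u => cross v1 (rel a1 v1 a2 v2 u))); [| | exact Hr];
    destruct a1, v1, a2, v2; unfold rel, traj, psub, padd, pscale, dot, cross; simpl;
    auto_derive; auto; ring.
Qed.

Lemma rel_crossing (a1 v1 a2 v2 : pt) (t1 t2 t : R) :
  traj a1 v1 t1 = traj a2 v2 t2 ->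
  rel a1 v1 a2 v2 t = psub (pscale (t - t2) v2) (pscale (t - t1) v1).
Proof.
  destruct a1 as [x1 y1], v1 as [p1 q1], a2 as [x2 y2], v2 as [p2 q2].
  unfold rel, traj, psub, padd, pscale; simpl; intros E; injection E as Ex Ey.
  f_equal; [replace x2 with (x1 + t1 * p1 - t2 * p2) by lra
           | replace y2 with (y1 + t1 * q1 - t2 * q2) by lra]; ring.
Qed.

Lemma cross_rel_crossing (a1 v1 a2 v2 : pt) (t1 t2 t : R) :
  traj a1 v1 t1 = traj a2 v2 t2 ->
  cross v1 (rel a1 v1 a2 v2 t) = (t - t2) * cross v1 v2.
Proof.
  intros E; rewrite (rel_crossing _ _ _ _ t1 t2 t E).
  destruct v1, v2; unfold cross, psub, pscale; simpl; ring.
Qed.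

Lemma cross_rel_sub_crossing (a1 v1 a2 v2 : pt) (t1 t2 t : R) :
  traj a1 v1 t1 = traj a2 v2 t2 ->
  cross (rel a1 v1 a2 v2 t) (psub v2 v1) = (t1 - t2) * cross v1 v2.
Proof.
  intros E; rewrite (rel_crossing _ _ _ _ t1 t2 t E).
  destruct v1, v2; unfold cross, psub, pscale; simpl; ring.
Qed.

Lemma derivative_mul_cross_rel_lt0 (a1 v1 a2 v2 : pt) (t1 t2 t : R) :
  v1 <> (0, 0) -> cross v1 v2 <> 0 -> traj a1 v1 t1 = traj a2 v2 t2 -> t < t2 < t1 ->
  let r := rel a1 v1 a2 v2 t in
  dot v1 v1 * cross r (psub v2 v1) * cross v1 r < 0.
Proof.
  intros Hv1 Hc E Ht r.
  unfold r; rewrite (cross_rel_crossing _ _ _ _ t1 t2 t E),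
                    (cross_rel_sub_crossing _ _ _ _ t1 t2 t E).
  assert (Hv := dot_self_gt0 v1 Hv1).
  assert (Hcc : 0 < cross v1 v2 * cross v1 v2) by (apply Rsqr_pos_lt; exact Hc).
  assert (Hpos : 0 < dot v1 v1 * ((t1 - t2) * (t2 - t)) * (cross v1 v2 * cross v1 v2))
    by (apply Rmult_lt_0_compat; [apply Rmult_lt_0_compat; [|apply Rmult_lt_0_compat]|]; lra).
  replace (dot v1 v1 * ((t1 - t2) * cross v1 v2) * ((t - t2) * cross v1 v2))
    with (- (dot v1 v1 * ((t1 - t2) * (t2 - t)) * (cross v1 v2 * cross v1 v2))) by ring.
  lra.
Qed.

Lemma div_norm_mul_angle_lt0 (n x y : R) :
  n * y < 0 -> n / (x * x + y * y) * angle x y < 0.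
Proof.
  intros Hny.
  assert (Hy : y <> 0) by (intros ->; lra).
  assert (Hphi := angle_mul_gt0 x y Hy).
  assert (HYY : 0 < y * y) by (apply Rsqr_pos_lt; exact Hy).
  assert (Hk : 0 < / (x * x + y * y)) by (apply Rinv_0_lt_compat; nra).
  assert (n * angle x y < 0)
    by (assert (y * y * (n * angle x y) < 0); nra).
  unfold Rdiv; nra.
Qed.

Lemma perceives_GRM_of_opposite_signs (CVA : R) (phi : R -> R) (t dphi : R) :
  0 <= CVA -> derivable_pt_lim phi t dphi ->
  - PI <= phi t <= PI -> dphi * phi t < 0 ->
  perceives_GRM CVA phi t.
Proof.
  intros HC Hd Hb Hs; exists dphi; split; [exact Hd|].
  destruct (Rlt_or_le 0 dphi); [left | right]; nra.
Qed.

Theorem theorem5 (CVA : R) (a1 v1 a2 v2 : pt) (P : pt) (t1 t2 : R) :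
  0 <= CVA <= PI ->
  v1 <> (0, 0) -> v2 <> (0, 0) ->
  cross v1 v2 <> 0 ->
  traj a1 v1 t1 = P -> traj a2 v2 t2 = P ->
  t1 > t2 ->
  forall t : R, t < t2 -> perceives_GRM CVA (phi21 a1 v1 a2 v2) t.
Proof.
  intros HC Hv1 _ Hc H1 H2 Ht t Htt.
  assert (E : traj a1 v1 t1 = traj a2 v2 t2) by congruence.
  set (r := rel a1 v1 a2 v2 t).
  assert (Hsign : dot v1 v1 * cross r (psub v2 v1) * cross v1 r < 0)
    by exact (derivative_mul_cross_rel_lt0 a1 v1 a2 v2 t1 t2 t Hv1 Hc E ltac:(lra)).
  assert (HY : cross v1 r <> 0) by (intros HY; rewrite HY in Hsign; lra).
  apply perceives_GRM_of_opposite_signs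
    with (dphi := dot v1 v1 * cross r (psub v2 v1)
                  / (dot v1 r * dot v1 r + cross v1 r * cross v1 r)).
  - lra.
  - exact (phi21_derivative a1 v1 a2 v2 t HY).
  - apply angle_bound.
  - exact (div_norm_mul_angle_lt0 _ _ _ Hsign).
Qed.
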